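(* Let $A = (a_{ij}) \in \mathbb{R}^{p \times n}$, let $1 \leq k \leq p$, let $l, u \in \mathbb{R}^n$ with $l_j \leq u_j$ for all $j$, let $P \subseteq \{1, \ldots, p\}$ with $|P| \geq k$, and let $\beta \in [0,1]^n$. Then for all $x \in \mathbb{R}^n$ with $l_j \leq x_j \leq u_j$ for all $j$, $$Q_k(Ax) \geq \sum_{j=1}^n (1 - \beta_j)\left(\min_{i \in P} a_{ij}\right)(x_j - l_j) + \sum_{j=1}^n \beta_j \left(\max_{i \in P} a_{ij}\right)(x_j - u_j) + \min_{i \in P}\sum_{j=1}^n (1 - \beta_j) a_{ij} l_j + \min_{i \in P}\sum_{j=1}^n \beta_j a_{ij} u_j.$$
   Context: For $y \in \mathbb{R}^p$ and an integer $1 \leq k \leq p$, $Q_k(y)$ denotes the $k$-th largest entry of $y$ (entries counted with multiplicity). *)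

From HB Require Import structures.
From mathcomp Require Import all_boot all_order all_algebra.
Set Implicit Arguments. Unset Strict Implicit. Unset Printing Implicit Defensive.
Import Order.TTheory GRing.Theory Num.Theory.
Local Open Scope ring_scope.

Definition Qk (R : realDomainType) (p : nat) (k : nat) (y : 'cV[R]_p) : R :=
  nth 0 (sort (fun a b : R => b <= a) [seq y i 0 | i <- enum 'I_p]) k.-1.

Definition min_over (R : realDomainType) (p : nat) (P : {set 'I_p})
  (f : 'I_p -> R) : R :=
  head 0 (sort (fun a b : R => a <= b) [seq f i | i <- enum P]).

Definition max_over (R : realDomainType) (p : nat) (P : {set 'I_p})
  (f : 'I_p -> R) : R :=
  head 0 (sort (fun a b : R => b <= a) [seq f i | i <- enum P]).

(** Fix a row [i] of [P]. Splitting each [x_j] into the weights [1 - beta_j]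
   and [beta_j], the product [a_ij x_j] is bounded below by the two McCormick
   underestimators [a_ij l_j + (min_P a_.j)(x_j - l_j)] and
   [a_ij u_j + (max_P a_.j)(x_j - u_j)]; summing over [j] and bounding the two
   remaining row sums by their minima over [P] shows that every entry of [Ax]
   indexed by [P] is at least the right-hand side.  Since [|P| >= k], at
   least [k] entries of [Ax] reach that bound, hence so does the [k]-th
   largest one. *)

From HB Require Import structures.
From mathcomp Require Import all_boot all_order all_algebra.
From mathcomp Require Import ring.
Import Order.TTheory GRing.Theory Num.Theory.

Set Implicit Arguments.
Unset Strict Implicit.

Lemma head_sort_rel (T : eqType) (r : rel T) (x0 x : T) (s : seq T) :
  transitive r -> total r -> x \in s -> r (head x0 (sort r s)) x.
Proof.
move=> r_tr r_tot; rewrite -(mem_sort r).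
have : sorted r (sort r s) by exact: sort_sorted.
case: (sort r s) => [|a t] //= t_path; rewrite inE => /predU1P [-> | xt].
- by have := r_tot a a; rewrite orbb.
- exact: (allP (order_path_min r_tr t_path)).
Qed.

Lemma nonincr_sorted_ge_nth d (T : porderType d) (x0 c : T) (s : seq T) i :
  sorted (fun a b => b <= a)%O s -> (i < count (>= c)%O s)%N ->
  (c <= nth x0 s i)%O.
Proof.
have ge_tr : transitive (fun a b : T => b <= a)%O.
  by move=> b a e ba eb; exact: le_trans eb ba.
elim: s i => [|a t IHt] i //= s_path.
case: i => [|i] /= lt_i; last first.
  apply: IHt (path_sorted s_path) _.
  by rewrite -ltnS (leq_trans lt_i) // -add1n leq_add2r leq_b1.
case ca: (c <= a)%O lt_i => //=; rewrite add0n -has_count => /hasP [v vt cv].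
rewrite -ca (le_trans cv) //; exact: (allP (order_path_min ge_tr s_path)).
Qed.

Local Open Scope ring_scope.

Lemma min_over_le (R : realDomainType) p (P : {set 'I_p}) (f : 'I_p -> R) i :
  i \in P -> min_over P f <= f i.
Proof.
move=> iP; apply: head_sort_rel; [exact: le_trans | exact: le_total |].
by apply: map_f; rewrite mem_enum.
Qed.

Lemma max_over_ge (R : realDomainType) p (P : {set 'I_p}) (f : 'I_p -> R) i :
  i \in P -> f i <= max_over P f.
Proof.
move=> iP; apply: (@head_sort_rel _ (fun a b : R => b <= a)).
- by move=> b a e ba eb; exact: le_trans eb ba.
- by move=> a b; exact: le_total.
- by apply: map_f; rewrite mem_enum.
Qed.

Lemma Qk_ge (R : realDomainType) p k (y : 'cV[R]_p) (P : {set 'I_p}) c :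
  (0 < k)%N -> (k <= #|P|)%N -> {in P, forall i, c <= y i 0} -> c <= Qk k y.
Proof.
move=> k_gt0 kP cP; apply: nonincr_sorted_ge_nth.
  by apply: sort_sorted => a b; exact: le_total.
rewrite count_sort count_map prednK // -size_filter (leq_trans kP) // cardE.
apply: uniq_leq_size (enum_uniq _) _ => i; rewrite mem_enum => iP.
by rewrite mem_filter mem_enum /= cP.
Qed.

Lemma mccormick_convex_lower (R : realDomainType) (a m M x l u b : R) :
  m <= a <= M -> l <= x <= u -> 0 <= b <= 1 ->
  (1 - b) * m * (x - l) + b * M * (x - u) + (1 - b) * a * l + b * a * u
    <= a * x.
Proof.
move=> /andP [ma aM] /andP [lx xu] /andP [b0 b1].
rewrite -subr_ge0.
have -> : a * x - ((1 - b) * m * (x - l) + b * M * (x - u)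
            + (1 - b) * a * l + b * a * u)
          = (1 - b) * (a - m) * (x - l) + b * (M - a) * (u - x) by ring.
by rewrite addr_ge0 // !mulr_ge0 // subr_ge0.
Qed.

Theorem theorem9 (R : realFieldType) (p n k : nat) (A : 'M[R]_(p, n))
  (l u beta : 'cV[R]_n) (P : {set 'I_p}) :
  (1 <= k <= p)%N ->
  (forall j, l j 0 <= u j 0) ->
  (k <= #|P|)%N ->
  (forall j, 0 <= beta j 0 <= 1) ->
  forall x : 'cV[R]_n, (forall j, l j 0 <= x j 0 <= u j 0) ->
  Qk k (A *m x) >=
    \sum_(j < n) (1 - beta j 0) * min_over P (fun i => A i j) * (x j 0 - l j 0)
  + \sum_(j < n) beta j 0 * max_over P (fun i => A i j) * (x j 0 - u j 0)
  + min_over P (fun i => \sum_(j < n) (1 - beta j 0) * A i j * l j 0)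
  + min_over P (fun i => \sum_(j < n) beta j 0 * A i j * u j 0).
Proof.
move=> /andP [k_gt0 _] _ kP beta01 x lxu.
apply: Qk_ge k_gt0 kP _ => i iP; rewrite mxE.
have entry_bound j :
    min_over P (fun i => A i j) <= A i j <= max_over P (fun i => A i j).
  by rewrite (min_over_le _ iP) (max_over_ge _ iP).
apply: le_trans (ler_sum _ (fun j _ =>
  mccormick_convex_lower (entry_bound j) (lxu j) (beta01 j))).
by rewrite !big_split /= !lerD // min_over_le.
Qed.
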